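(* Let $\gamma^*\ge 0$ and $\epsilon>0$, and let $u,\hat u:\mathbf{S}\to\mathbb{R}^{|P|}$ be two utility functions on the same finite game structure. If $|u_p(s)-\hat u_p(s)|\le\epsilon$ for every $(p,s)\in\mathcal{I}$ satisfying $\mathrm{Reg}_p(s;u)=0$ or $\mathrm{Reg}_p(s;\hat u)\le\gamma^*$, then $E(u)\subseteq E_{2\epsilon}(\hat u)$ and $E_\gamma(\hat u)\subseteq E_{2\epsilon+\gamma}(u)$ for all $0\le\gamma\le\gamma^*$.
   Context: A finite normal-form game structure: finite player set $P$, finite pure strategy sets $S_p$, pure profile space $\mathbf{S}=\prod_p S_p$, index set $\mathcal{I}=P\times\mathbf{S}$. For a utility function $u:\mathbf{S}\to\mathbb{R}^{|P|}$, a pure profile $s$ and player $p$, $A_{p,s}$ is the set of pure profiles obtained by replacing $p$'s strategy in $s$ by any $t\in S_p$; $\mathrm{Reg}_p(s;u)=\sup_{s'\in A_{p,s}}u_p(s')-u_p(s)$, $\mathrm{Reg}(s;u)=\max_p\mathrm{Reg}_p(s;u)$. $E_\gamma(u)=\{s\in\mathbf{S}:\mathrm{Reg}(s;u)\le\gamma\}$ and $E(u)=E_0(u)$. *)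

From HB Require Import structures.
From mathcomp Require Import all_boot all_order all_algebra.
Set Implicit Arguments. Unset Strict Implicit. Unset Printing Implicit Defensive.
Import Order.TTheory GRing.Theory Num.Theory.
Local Open Scope ring_scope.

Definition profile (P : finType) (S : P -> finType) := {dffun forall p : P, S p}.

Definition deviate (P : finType) (S : P -> finType) (s : profile S) (p : P)
  (t : S p) : profile S :=
  [ffun q => match boolP (p == q) with
             | AltTrue e => ecast q (S q) (eqP e) t
             | AltFalse _ => s q end].

(* utility function u : S -> R^|P|, written u s p = u_p(s) *)
Definition utility (R : realFieldType) (P : finType) (S : P -> finType) :=
  profile S -> P -> R.

(* Reg_p(s;u) = sup_{s' in A_{p,s}} u_p(s') - u_p(s).  A_{p,s} is finite and
   contains s itself (t = s p), so the sup is a max; seeding the big max with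
   u_p(s) does not change its value. *)
Definition regp (R : realFieldType) (P : finType) (S : P -> finType)
  (u : utility R S) (p : P) (s : profile S) : R :=
  \big[Num.max/u s p]_(t : S p) u (deviate s t) p - u s p.

Definition reg (R : realFieldType) (P : finType) (S : P -> finType)
  (u : utility R S) (s : profile S) : R :=
  \big[Num.max/0]_(p : P) regp u p s.

Definition Eg (R : realFieldType) (P : finType) (S : P -> finType)
  (u : utility R S) (g : R) : {set profile S} :=
  [set s | reg u s <= g].

Definition E (R : realFieldType) (P : finType) (S : P -> finType)
  (u : utility R S) : {set profile S} := Eg u 0.

From HB Require Import structures.
From mathcomp Require Import all_boot all_order all_algebra.
From mathcomp Require Import lra.
Set Implicit Arguments. Unset Strict Implicit. Unset Printing Implicit Defensive.
Import Order.TTheory GRing.Theory Num.Theory.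
Local Open Scope ring_scope.

(* A best reply [t] of player [p] at [s] under [u] turns [Reg_p(s;u)] into
   [u_p(s') - u_p(s)], where [s'] is the deviation to [t] and has zero
   [u]-regret.  If [u] and [v] are [eps]-close at [s] and [s'], this is at most
   [v_p(s') - v_p(s) + 2 eps <= Reg_p(s;v) + 2 eps].  The hypothesis gives
   closeness at [s'] through its zero regret and at [s] through the regret bound
   assumed at [s]; the first inclusion uses this with [u] and [uh] exchanged. *)

Section Deviation.
Variables (P : finType) (S : P -> finType).

Lemma deviate_at (s : profile S) p (t : S p) : deviate s t p = t.
Proof.
rewrite /deviate ffunE; destruct (boolP (p == p)) as [e|ne]; last by rewrite eqxx in ne.
by rewrite (eq_irrelevance (eqP e) (erefl p)).
Qed.

Lemma deviate_ne (s : profile S) p (t : S p) q : p != q -> deviate s t q = s q.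
Proof.
by move=> pq; rewrite /deviate ffunE; destruct (boolP (p == q)) as [e|]; rewrite // e in pq.
Qed.

Lemma deviateK (s : profile S) p (t t' : S p) :
  deviate (deviate s t) t' = deviate s t'.
Proof.
apply/ffunP => q; have [<-|pq] := eqVneq p q; first by rewrite !deviate_at.
by rewrite !deviate_ne.
Qed.

Lemma deviate_id (s : profile S) p : deviate s (s p) = s.
Proof.
apply/ffunP => q; have [<-|pq] := eqVneq p q; first by rewrite deviate_at.
by rewrite deviate_ne.
Qed.

End Deviation.

Section Regret.
Variables (R : realFieldType) (P : finType) (S : P -> finType).
Implicit Types (u v : utility R S) (s : profile S).

Definition best_payoff u p s : R :=
  \big[Num.max/u s p]_(t : S p) u (deviate s t) p.

Lemma regpE u p s : regp u p s = best_payoff u p s - u s p.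
Proof. by []. Qed.

Lemma le_best_payoff u p s (t : S p) : u (deviate s t) p <= best_payoff u p s.
Proof. exact: le_bigmax. Qed.

Lemma best_payoff_le u p s m :
  (forall t : S p, u (deviate s t) p <= m) -> best_payoff u p s <= m.
Proof. by move=> le_m; apply: bigmax_le => //; rewrite -{1}(deviate_id s p). Qed.

Lemma best_payoff_deviate u p s (t : S p) :
  best_payoff u p (deviate s t) = best_payoff u p s.
Proof.
apply/le_anti/andP; split; apply: best_payoff_le => t'.
  by rewrite deviateK le_best_payoff.
by rewrite -(deviateK s t) le_best_payoff.
Qed.

Lemma exists_best_reply u p s :
  exists t : S p, best_payoff u p s = u (deviate s t) p.
Proof.
exists [arg max_(t > s p) u (deviate s t) p]%O.
apply/le_anti/andP; split; last exact: le_best_payoff.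
by case: arg_maxP => // t _ max_t; apply: best_payoff_le => t'; apply: max_t.
Qed.

Lemma regp_ge0 u p s : 0 <= regp u p s.
Proof. by rewrite regpE subr_ge0 -{1}(deviate_id s p) le_best_payoff. Qed.

Lemma regp_best_reply u p s (t : S p) :
  best_payoff u p s = u (deviate s t) p -> regp u p (deviate s t) = 0.
Proof. by rewrite regpE best_payoff_deviate => ->; rewrite subrr. Qed.

Lemma regp_perturb u v p s (t : S p) e :
  best_payoff u p s = u (deviate s t) p ->
  `|u s p - v s p| <= e ->
  `|u (deviate s t) p - v (deviate s t) p| <= e ->
  regp u p s <= regp v p s + 2 * e.
Proof.
rewrite !regpE => -> /[!ler_norml] /andP[close_s _] /andP[_ close_t].
have := le_best_payoff v s t; lra.
Qed.

Lemma reg_le u s g : (reg u s <= g) = (0 <= g) && [forall p, regp u p s <= g].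
Proof.
apply/bigmax_leP/andP => [[g0 le_g]|[g0 /forallP le_g]]; split => //.
by apply/forallP => p; apply: le_g.
Qed.

Lemma Eg_subset u v g g' :
  0 <= g' ->
  (forall s, (forall p, regp u p s <= g) -> forall p, regp v p s <= g') ->
  Eg u g \subset Eg v g'.
Proof.
move=> g'0 transfer; apply/subsetP => s; rewrite !inE !reg_le g'0.
by case/andP=> _ /forallP/transfer le_g'; apply/forallP.
Qed.

End Regret.

Theorem lemma2 (R : realFieldType) (P : finType) (S : P -> finType)
  (u uh : utility R S) (gstar eps : R) :
  0 <= gstar -> 0 < eps ->
  (forall (p : P) (s : profile S),
     regp u p s = 0 \/ regp uh p s <= gstar ->
     `|u s p - uh s p| <= eps) ->
  E u \subset Eg uh (2 * eps) /\
  (forall g : R, 0 <= g -> g <= gstar ->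
     Eg uh g \subset Eg u (2 * eps + g)).
Proof.
move=> gstar0 eps0 close; have eps2_0 : 0 <= 2 * eps by rewrite mulr_ge0 // ltW.
split.
  apply: Eg_subset => // s le0 p.
  have reg0 : regp u p s = 0 by apply/le_anti; rewrite le0 regp_ge0.
  have [t best_t] := exists_best_reply uh p s.
  have close_t : `|uh (deviate s t) p - u (deviate s t) p| <= eps.
    by rewrite distrC; apply: close; right; rewrite (regp_best_reply best_t).
  have close_s : `|uh s p - u s p| <= eps by rewrite distrC; apply: close; left.
  by have := regp_perturb best_t close_s close_t; rewrite reg0 add0r.
move=> g g0 g_gstar; apply: Eg_subset; first by rewrite addr_ge0.
move=> s le_g p; have [t best_t] := exists_best_reply u p s.
have close_t := close p _ (or_introl (regp_best_reply best_t)).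
have close_s := close p s (or_intror (le_trans (le_g p) g_gstar)).
rewrite addrC (le_trans (regp_perturb best_t close_s close_t)) //.
by rewrite lerD2r le_g.
Qed.
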